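(* Let $\{d_{k,j}:k,j\geq 0\}$ be nonnegative numbers such that $D_j(\delta):=\sum_{k\geq 0}d_{k,j}\delta^k\in(0,\infty)$ for all $\delta>0$ and all $j\geq 0$. Let $\{\delta_j(\cdot):j\geq 0\}$ be positive functions on $[0,\infty)$ with $\delta_j(t)\to\infty$ as $t\to\infty$ for every $j$, assume $\sum_{j\geq 0}\frac{d_{j,j}\delta^j}{D_j(\delta)}\in(0,\infty)$ for all $\delta>0$, and let $\{N(t):t\geq 0\}$ be nonnegative integer valued random variables with $$P(N(t)=k)=\frac{\frac{d_{k,k}(\delta_k(t))^k}{D_k(\delta_k(t))}}{\sum_{j\geq 0}\frac{d_{j,j}(\delta_j(t))^j}{D_j(\delta_j(t))}},\quad k\geq 0.$$ Assume the following: (B1) there exists an integer $n\geq 0$ such that for all $j\geq n$, $d_{k,j}=d_k$ for all $k\geq 0$ (so $D_j=D:=\sum_{k\ge0}d_k\delta^k$) and $\delta_j(\cdot)=\delta(\cdot)$ do not depend on $j$; moreover there exist functions $v:(0,\infty)\to(0,\infty)$ with $v(t)\to\infty$ as $t\to\infty$, and a differentiable function $\Delta:(0,\infty)\to\mathbb{R}$, such that $\lim_{t\to\infty}\frac{1}{v(t)}\log D(ut)=\Delta(u)$ for all $u>0$; (B2) the set $\{k\geq 0:d_{k,k}>0\}$ is unbounded; (B3) for all $k\in\{0,1,\ldots,n-1\}$: if $d_k>0$ then $\lim_{t\to\infty}\frac{d_{k,k}(\delta_k(t))^k/D_k(\delta_k(t))}{d_k(\delta(t))^k/D(\delta(t))}=0$,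 and if $d_k=0$ then $d_{k,k}=0$. Let $\Lambda(\theta):=\Delta(e^\theta)-\Delta(1)$, assume that $\Delta''(1)$ exists (so that $\Lambda''(0)$ exists), and assume moreover: (i) whenever $u(t)\to1$ as $t\to\infty$, the function $H_1(t):=\log\frac{D(u(t)\delta(t))}{D(\delta(t))}-v(\delta(t))(\Delta(u(t))-\Delta(1))$ is bounded; (ii) $H_2(t):=\sqrt{v(\delta(t))}\left(\Lambda'(0)-\frac{\delta(t)D'(\delta(t))}{v(\delta(t))D(\delta(t))}\right)$ is bounded; (iii) $H_3(t):=\frac{1}{\sqrt{v(\delta(t))}}\left(\frac{\delta(t)D'(\delta(t))}{D(\delta(t))}-\mathbb{E}[N(t)]\right)$ is bounded. Then for every choice of positive numbers $\{a(t):t>0\}$ with $a(t)\to0$ and $v(\delta(t))a(t)\to\infty$ as $t\to\infty$, the family $\left\{\frac{N(t)-\mathbb{E}[N(t)]}{v(\delta(t))}\sqrt{v(\delta(t))a(t)}:t>0\right\}$ satisfies the large deviation principle with speed $1/a(t)$ and good rate function $\tilde{\Lambda}^*$ given by $\tilde{\Lambda}^*(x)=\frac{x^2}{2\Lambda''(0)}$ if $\Lambda''(0)>0$, and, if $\Lambda''(0)=0$, by $\tilde{\Lambda}^*(0)=0$ and $\tilde{\Lambda}^*(x)=\infty$ for $x\neq0$.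
   Context: A family of real random variables $\{X_t:t>0\}$ satisfies the large deviation principle (LDP) with speed $v_t\to\infty$ and rate function $I$ (a lower semicontinuous map $\mathbb{R}\to[0,\infty]$; good if all level sets $\{I\le\eta\}$ are compact) if $\limsup_{t\to\infty}\frac{1}{v_t}\log P(X_t\in C)\leq-\inf_{x\in C}I(x)$ for all closed $C$ and $\liminf_{t\to\infty}\frac{1}{v_t}\log P(X_t\in O)\geq-\inf_{x\in O}I(x)$ for all open $O$. *)

From Stdlib Require Import Reals Lra ClassicalEpsilon.
From Stdlib Require Import Rtopology.
From Coquelicot Require Import Coquelicot.
Open Scope R_scope.

Definition Dser (c : nat -> R) (x : R) : R := Series (fun k => c k * x ^ k).

Definition Dj (d : nat -> nat -> R) (j : nat) (x : R) : R :=
  Dser (fun k => d k j) x.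

Definition weight (d : nat -> nat -> R) (deltas : nat -> R -> R) (k : nat) (t : R) : R :=
  d k k * (deltas k t) ^ k / Dj d k (deltas k t).

Definition pmf (d : nat -> nat -> R) (deltas : nat -> R -> R) (t : R) (k : nat) : R :=
  weight d deltas k t / Series (fun j => weight d deltas j t).

Definition mean (p : nat -> R) : R := Series (fun k => INR k * p k).

Definition prob (p : nat -> R) (f : nat -> R) (A : R -> Prop) : R :=
  Series (fun k => if excluded_middle_informative (A (f k)) then p k else 0).

Definition ev_infty (P : R -> Prop) : Prop := exists T : R, forall t, T < t -> P t.

Definition rate_function (I : R -> Rbar) : Prop :=
  forall eta : R, closed_set (fun x => Rbar_le (I x) eta).
Definition good_rate_function (I : R -> Rbar) : Prop :=
  rate_function I /\ forall eta : R, compact (fun x => Rbar_le (I x) eta).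

(** LDP for the family X_t := X t (N(t)), N(t) with law p t, speed s, rate I.
    Upper bound  limsup (1/s) log P(X_t in C) <= - inf_C I  written out as:
      for every real y <= inf_C I and eps > 0, eventually P(X_t in C) <= exp((-y+eps) s(t)).
    Lower bound  liminf (1/s) log P(X_t in O) >= - inf_O I  written out as:
      for every x in O with I x finite and eps > 0,
      eventually P(X_t in O) >= exp((-I x - eps) s(t)). *)
Definition LDP (p : R -> nat -> R) (X : R -> nat -> R) (s : R -> R) (I : R -> Rbar) : Prop :=
  rate_function I /\
  (forall C : R -> Prop, closed_set C ->
     forall y : R, (forall x, C x -> Rbar_le y (I x)) ->
     forall eps : R, 0 < eps ->
       ev_infty (fun t => prob (p t) (X t) C <= exp ((- y + eps) * s t))) /\
  (forall O : R -> Prop, open_set O ->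
     forall (x ix : R), O x -> I x = Finite ix ->
     forall eps : R, 0 < eps ->
       ev_infty (fun t => exp ((- ix - eps) * s t) <= prob (p t) (X t) O)).

Definition Lambda (Delta : R -> R) (theta : R) : R := Delta (exp theta) - Delta 1.

Definition tilde_rate (L2 : R) (x : R) : Rbar :=
  if Rlt_dec 0 L2 then Finite (x ^ 2 / (2 * L2))
  else if Req_EM_T x 0 then Finite 0 else p_infty.

(* Write X_t = (N(t) - E N(t)) / v(delta(t)) * sqrt (v(delta(t)) a(t)).  At
   [l / a(t)] its moment generating function is exp (- s E N(t)) W(s) / S, with
   the tilt s = l / sqrt (v a), the normaliser S of the law of N(t) and the tilted
   mass W(s) = sum_k w_k e^(s k).  By (B1)-(B3) the law of N(t) is the power-series
   law d_k delta^k / D(delta) up to a negligible perturbation on k <= n, so S and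
   W(s) / (D(e^s delta) / D(delta)) stay in [1/2, 1].  Assumption (i) replaces
   log (D(e^s delta) / D(delta)) by v Lambda(s) up to O(1); the second-order
   Taylor expansion of Lambda at 0 together with a v s^2 = l^2 yields
   Lambda''(0) l^2 / 2, and (ii), (iii) cancel the linear term against s E N(t) up
   to O(sqrt a).  Hence a log E exp (l X_t / a) -> Lambda''(0) l^2 / 2, and the
   Gartner-Ellis argument for this quadratic limit (a two-sided Chernoff bound for
   closed sets, exponential tilting for open sets) gives the LDP. *)

From Stdlib Require Import Reals Lra Lia Psatz ClassicalEpsilon Rtopology FunctionalExtensionality PropExtensionality.
From Coquelicot Require Import Coquelicot.
Open Scope R_scope.

#[local] Instance ev_infty_filter : ProperFilter ev_infty := Rbar_locally_filter p_infty.

Lemma ev_infty_gt (T : R) : ev_infty (fun t => T < t).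
Proof. now exists T. Qed.

Lemma ev_infty_forall_lt (n : nat) (P : nat -> R -> Prop) :
  (forall k, (k < n)%nat -> ev_infty (P k)) ->
  ev_infty (fun t => forall k, (k < n)%nat -> P k t).
Proof.
  induction n as [|n IH]; intros HP.
  - exists 0. intros t _ k Hk. lia.
  - assert (Hlt : ev_infty (fun t => forall k, (k < n)%nat -> P k t))
      by (apply IH; intros k Hk; apply HP; lia).
    generalize (filter_and _ _ Hlt (HP n (Nat.lt_succ_diag_r n))).
    apply filter_imp. intros t [Ht Hn] k Hk.
    destruct (Nat.eq_dec k n) as [->|Hne]; [exact Hn | apply Ht; lia].
Qed.

Lemma is_lim_ev_close (f : R -> R) (l : R) : is_lim f p_infty l ->
  forall eps, 0 < eps -> ev_infty (fun t => Rabs (f t - l) < eps).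
Proof. intros Hf eps Heps. apply is_lim_spec in Hf. exact (Hf (mkposreal eps Heps)). Qed.

Lemma is_lim_ev_gt (f : R -> R) : is_lim f p_infty p_infty ->
  forall M, ev_infty (fun t => M < f t).
Proof. intros Hf M. apply is_lim_spec in Hf. exact (Hf M). Qed.

Lemma ex_series_Rscal (c : R) (a : nat -> R) :
  ex_series a -> ex_series (fun k => c * a k).
Proof. exact (ex_series_scal_l c a). Qed.

Lemma ex_series_Rplus (a b : nat -> R) :
  ex_series a -> ex_series b -> ex_series (fun k => a k + b k).
Proof. exact (ex_series_plus a b). Qed.

Lemma exp_monotone (x y : R) : x <= y -> exp x <= exp y.
Proof. intros [Hlt|<-]; [apply Rlt_le, exp_increasing, Hlt | apply Rle_refl]. Qed.

Lemma one_le_exp (x : R) : 0 <= x -> 1 <= exp x.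
Proof. pose proof (exp_ineq1_le x). lra. Qed.

Lemma tilde_rate_level_set (c eta : R) :
  exists lo hi, forall x, Rbar_le (tilde_rate c x) eta <-> lo <= x <= hi.
Proof.
  unfold tilde_rate. destruct (Rlt_dec 0 c) as [Hc|Hc].
  - destruct (Rle_dec 0 eta) as [He|He].
    + set (h := sqrt (2 * c * eta)).
      assert (Hh : h * h = 2 * c * eta) by (apply sqrt_sqrt; nra).
      assert (Hh0 : 0 <= h) by apply sqrt_pos.
      exists (- h), h. intros x. simpl.
      assert (Hx : x ^ 2 / (2 * c) <= eta <-> x * x <= h * h).
      { rewrite Hh. split; intros H.
        - apply (Rmult_le_compat_r (2 * c)) in H; [|lra].
          replace (x ^ 2 / (2 * c) * (2 * c)) with (x * x) in H by (field; lra). lra.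
        - apply (Rmult_le_reg_r (2 * c)); [lra|].
          replace (x ^ 2 / (2 * c) * (2 * c)) with (x * x) by (field; lra). lra. }
      rewrite Hx. split; intros H; nra.
    + exists 1, 0. intros x. simpl. split; [|lra]. intros Hx.
      assert (0 <= x ^ 2 / (2 * c)) by (apply Rdiv_le_0_compat; nra). lra.
  - exists 0, (if Rle_dec 0 eta then 0 else -1). intros x.
    destruct (Req_EM_T x 0), (Rle_dec 0 eta); simpl; lra.
Qed.

Lemma tilde_rate_good (c : R) : good_rate_function (tilde_rate c).
Proof.
  assert (Hcompact : forall eta : R, compact (fun x => Rbar_le (tilde_rate c x) eta)).
  { intros eta. destruct (tilde_rate_level_set c eta) as (lo & hi & Hlevel).
    replace (fun x => Rbar_le (tilde_rate c x) eta) with (fun x => lo <= x <= hi)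
      by (apply functional_extensionality; intros x;
          apply propositional_extensionality; symmetry; apply Hlevel).
    apply compact_P3. }
  split; [intros eta; apply compact_P2|]; apply Hcompact.
Qed.

Lemma tilde_rate_finite (c x ix : R) :
  tilde_rate c x = Finite ix -> exists th, c * th = x /\ ix = c * th ^ 2 / 2.
Proof.
  unfold tilde_rate. destruct (Rlt_dec 0 c) as [Hc|Hc].
  - intros [= <-]. exists (x / c). split; field; lra.
  - destruct (Req_EM_T x 0) as [->|]; [|discriminate]. intros [= <-].
    exists 0. split; [ring | field].
Qed.

(* When [c <= 0] the rate is finite only at [0], so a positive [y] forces [C] to
   avoid a neighbourhood of [0]; this is where closedness of [C] is used. *)
Lemma tilde_rate_separation (c y : R) (C : R -> Prop) :
  closed_set C -> (forall x, C x -> Rbar_le y (tilde_rate c x)) ->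
  exists r th, 0 <= r /\ 0 <= th /\ (forall x, C x -> r <= Rabs x) /\
    - th * r + c * th ^ 2 / 2 <= - y.
Proof.
  intros HC Hy. destruct (Rle_dec y 0) as [Hy0|Hy0].
  { exists 0, 0. repeat split; intros; try apply Rabs_pos; lra. }
  unfold tilde_rate in Hy. destruct (Rlt_dec 0 c) as [Hc|Hc].
  - set (r := sqrt (2 * c * y)).
    assert (Hr : r * r = 2 * c * y) by (apply sqrt_sqrt; nra).
    assert (Hr0 : 0 <= r) by apply sqrt_pos.
    exists r, (r / c). split; [exact Hr0|]. split; [apply Rdiv_le_0_compat; lra|]. split.
    + intros x Cx. specialize (Hy x Cx). cbn [Rbar_le] in Hy.
      apply (Rmult_le_compat_r (2 * c)) in Hy; [|lra].
      replace (x ^ 2 / (2 * c) * (2 * c)) with (Rabs x ^ 2) in Hy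
        by (rewrite pow2_abs; field; lra).
      pose proof (Rabs_pos x). nra.
    + replace (- (r / c) * r + c * (r / c) ^ 2 / 2) with (- (r * r) / (2 * c)) by (field; lra).
      rewrite Hr. right. field. lra.
  - assert (H0 : ~ C 0).
    { intros C0. specialize (Hy 0 C0). destruct (Req_EM_T 0 0); [simpl in Hy; lra | congruence]. }
    destruct (HC 0 H0) as [r Hr]. pose proof (cond_pos r).
    exists r, (y / r). split; [lra|]. split; [apply Rdiv_le_0_compat; lra|]. split.
    + intros x Cx. destruct (Rle_dec r (Rabs x)) as [|Hlt]; [assumption|].
      exfalso. apply (Hr x); [unfold disc; rewrite Rminus_0_r; lra | exact Cx].
    + replace (- (y / r) * r) with (- y) by (field; lra).
      assert (0 <= (y / r) ^ 2) by nra. nra.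
Qed.

Definition mgf (p X : nat -> R) (mu : R) : R := Series (fun k => p k * exp (mu * X k)).

Lemma chernoff_term_le (q mu r x : R) : 0 <= q -> 0 <= mu -> r <= Rabs x ->
  q <= exp (- mu * r) * (q * exp (mu * x) + q * exp (- mu * x)).
Proof.
  intros Hq Hmu Hr.
  assert (Hsplit : exp (- mu * r) * (q * exp (mu * x) + q * exp (- mu * x))
    = q * exp (mu * (x - r)) + q * exp (mu * (- x - r)))
    by (replace (mu * (x - r)) with (mu * x + - mu * r) by ring;
        replace (mu * (- x - r)) with (- mu * x + - mu * r) by ring;
        rewrite !exp_plus; ring).
  rewrite Hsplit.
  pose proof (exp_pos (mu * (x - r))). pose proof (exp_pos (mu * (- x - r))).
  destruct (Rle_dec 0 x).
  - rewrite Rabs_right in Hr by lra.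
    assert (1 <= exp (mu * (x - r))) by (apply one_le_exp; nra). nra.
  - rewrite Rabs_left in Hr by lra.
    assert (1 <= exp (mu * (- x - r))) by (apply one_le_exp; nra). nra.
Qed.

Lemma prob_le_chernoff (p X : nat -> R) (C : R -> Prop) (r mu : R) :
  (forall k, 0 <= p k) -> 0 <= mu ->
  ex_series (fun k => p k * exp (mu * X k)) ->
  ex_series (fun k => p k * exp (- mu * X k)) ->
  (forall x, C x -> r <= Rabs x) ->
  prob p X C <= exp (- mu * r) * (mgf p X mu + mgf p X (- mu)).
Proof.
  intros Hp Hmu Hplus Hminus HC. unfold prob, mgf.
  rewrite <- (Series_plus _ _ Hplus Hminus), <- Series_scal_l.
  apply Series_le.
  - intros k. pose proof (Hp k). pose proof (exp_pos (- mu * r)).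
    pose proof (exp_pos (mu * X k)). pose proof (exp_pos (- mu * X k)).
    destruct (excluded_middle_informative (C (X k))) as [Ck|_].
    + split; [lra|]. apply chernoff_term_le; auto.
    + split; [lra|]. apply Rmult_le_pos; nra.
  - apply ex_series_Rscal, ex_series_Rplus; assumption.
Qed.

Lemma tilt_term_le (O : R -> Prop) (q x r th lam xi : R) :
  0 <= q -> 0 <= lam -> (forall y, Rabs (y - x) < r -> O y) ->
  q * exp (th * xi) <=
    exp (th * x + Rabs th * r) * (if excluded_middle_informative (O xi) then q else 0)
    + exp (- lam * (x + r)) * (q * exp ((th + lam) * xi))
    + exp (lam * (x - r)) * (q * exp ((th - lam) * xi)).
Proof.
  intros Hq Hlam HO.
  assert (Eup : exp (- lam * (x + r)) * (q * exp ((th + lam) * xi))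
              = q * exp (th * xi) * exp (lam * (xi - x - r))).
  { replace ((th + lam) * xi) with (th * xi + lam * (xi - x - r) + lam * (x + r)) by ring.
    rewrite !exp_plus. replace (- lam * (x + r)) with (- (lam * (x + r))) by ring.
    rewrite exp_Ropp. field. apply Rgt_not_eq, exp_pos. }
  assert (Edown : exp (lam * (x - r)) * (q * exp ((th - lam) * xi))
                = q * exp (th * xi) * exp (lam * (x - r - xi))).
  { replace ((th - lam) * xi) with (th * xi + lam * (x - r - xi) + - (lam * (x - r))) by ring.
    rewrite !exp_plus, exp_Ropp. field. apply Rgt_not_eq, exp_pos. }
  rewrite Eup, Edown.
  set (Q := q * exp (th * xi)).
  assert (HQ : 0 <= Q) by (apply Rmult_le_pos; [lra | apply Rlt_le, exp_pos]).
  assert (Hgain : forall z, 0 <= z -> Q <= Q * exp z).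
  { intros z Hz. rewrite <- (Rmult_1_r Q) at 1. apply Rmult_le_compat_l; [lra | apply one_le_exp, Hz]. }
  pose proof (Hgain _ (Rle_refl 0)) as HQ0. rewrite exp_0, Rmult_1_r in HQ0.
  assert (Hup : 0 <= Q * exp (lam * (xi - x - r))) by (apply Rmult_le_pos; [lra | apply Rlt_le, exp_pos]).
  assert (Hdown : 0 <= Q * exp (lam * (x - r - xi))) by (apply Rmult_le_pos; [lra | apply Rlt_le, exp_pos]).
  assert (Hind : 0 <= exp (th * x + Rabs th * r) * (if excluded_middle_informative (O xi) then q else 0))
    by (apply Rmult_le_pos; [apply Rlt_le, exp_pos | destruct excluded_middle_informative; lra]).
  destruct (Rlt_dec (Rabs (xi - x)) r) as [Hin|Hout].
  - destruct excluded_middle_informative as [_|HnO]; [|exfalso; apply HnO, HO, Hin].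
    assert (Q <= exp (th * x + Rabs th * r) * q); [|lra].
    unfold Q. rewrite Rmult_comm. apply Rmult_le_compat_r; [exact Hq|].
    apply exp_monotone. replace (th * xi) with (th * x + th * (xi - x)) by ring.
    pose proof (Rle_abs (th * (xi - x))) as Habs. rewrite Rabs_mult in Habs.
    pose proof (Rabs_pos th). nra.
  - destruct (Rle_dec x xi).
    + rewrite Rabs_right in Hout by lra.
      pose proof (Hgain (lam * (xi - x - r)) ltac:(nra)). lra.
    + rewrite Rabs_left in Hout by lra.
      pose proof (Hgain (lam * (x - r - xi)) ltac:(nra)). lra.
Qed.

Lemma mgf_le_tilt (p X : nat -> R) (O : R -> Prop) (x r th lam : R) :
  (forall k, 0 <= p k) -> 0 <= lam -> (forall y, Rabs (y - x) < r -> O y) ->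
  ex_series p ->
  ex_series (fun k => p k * exp ((th + lam) * X k)) ->
  ex_series (fun k => p k * exp ((th - lam) * X k)) ->
  mgf p X th <= exp (th * x + Rabs th * r) * prob p X O
    + exp (- lam * (x + r)) * mgf p X (th + lam)
    + exp (lam * (x - r)) * mgf p X (th - lam).
Proof.
  intros Hp Hlam HO Hsum Hup Hdown.
  assert (Hind : ex_series (fun k => if excluded_middle_informative (O (X k)) then p k else 0)).
  { apply (@ex_series_le R_AbsRing R_CompleteNormedModule _ p); [|exact Hsum].
    intros k. change norm with Rabs. simpl.
    pose proof (Hp k). destruct excluded_middle_informative; rewrite Rabs_right; lra. }
  unfold prob, mgf. rewrite <- !Series_scal_l.
  rewrite <- Series_plus, <- Series_plus by (try apply ex_series_Rplus; apply ex_series_Rscal; assumption).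
  apply Series_le.
  - intros k. split; [apply Rmult_le_pos; [apply Hp | apply Rlt_le, exp_pos]|].
    apply tilt_term_le; auto.
  - repeat apply ex_series_Rplus; apply ex_series_Rscal; assumption.
Qed.

Lemma prob_lower_from_tilt (Pr M0 B k A e1 g ia : R) :
  exp ((A - e1) * ia) <= M0 -> M0 <= exp (k * ia) * Pr + B ->
  B <= 2 * exp ((A - g + e1) * ia) -> 4 <= exp ((g - 2 * e1) * ia) ->
  exp ((A - e1 - k) * ia) / 2 <= Pr.
Proof.
  intros HM0 Htilt HB Hgap.
  assert (Hsplit : exp ((A - e1) * ia) = exp ((A - g + e1) * ia) * exp ((g - 2 * e1) * ia))
    by (rewrite <- exp_plus; f_equal; ring).
  assert (Hk : exp ((A - e1 - k) * ia) * exp (k * ia) = exp ((A - e1) * ia))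
    by (rewrite <- exp_plus; f_equal; ring).
  pose proof (exp_pos (k * ia)). pose proof (exp_pos ((A - g + e1) * ia)).
  apply (Rmult_le_reg_r (exp (k * ia))); [assumption|]. nra.
Qed.

Lemma tilted_tails_le (M1 M2 x r th lam c e1 a : R) : 0 < a -> c * th = x ->
  M1 <= exp ((c * (th + lam) ^ 2 / 2 + e1) * / a) ->
  M2 <= exp ((c * (th - lam) ^ 2 / 2 + e1) * / a) ->
  exp (- (lam / a) * (x + r)) * M1 + exp (lam / a * (x - r)) * M2
  <= 2 * exp ((c * th ^ 2 / 2 - (lam * r - c * lam ^ 2 / 2) + e1) * / a).
Proof.
  intros Ha Hx HM1 HM2.
  assert (Hup : exp (- (lam / a) * (x + r)) * M1
                <= exp ((c * th ^ 2 / 2 - (lam * r - c * lam ^ 2 / 2) + e1) * / a)).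
  { eapply Rle_trans; [apply Rmult_le_compat_l; [apply Rlt_le, exp_pos | exact HM1]|].
    rewrite <- exp_plus. right. f_equal. rewrite <- Hx. field. lra. }
  assert (Hdown : exp (lam / a * (x - r)) * M2
                  <= exp ((c * th ^ 2 / 2 - (lam * r - c * lam ^ 2 / 2) + e1) * / a)).
  { eapply Rle_trans; [apply Rmult_le_compat_l; [apply Rlt_le, exp_pos | exact HM2]|].
    rewrite <- exp_plus. right. f_equal. rewrite <- Hx. field. lra. }
  lra.
Qed.

Lemma tilt_parameters (c th r0 eps : R) : 0 < r0 -> 0 < eps ->
  exists r lam, 0 < r <= r0 /\ Rabs th * r <= eps / 4 /\ 0 <= lam /\
    0 < lam * r - c * lam ^ 2 / 2.
Proof.
  intros Hr0 Heps. pose proof (Rabs_pos th). pose proof (Rabs_pos c).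
  set (r := Rmin r0 (eps / (4 * (Rabs th + 1)))).
  assert (Hr : 0 < r) by (apply Rmin_pos; [lra | apply Rdiv_lt_0_compat; lra]).
  assert (Hr_eps : r * (4 * (Rabs th + 1)) <= eps).
  { replace eps with (eps / (4 * (Rabs th + 1)) * (4 * (Rabs th + 1))) by (field; lra).
    apply Rmult_le_compat_r; [lra | apply Rmin_r]. }
  exists r, (r / (Rabs c + 1)). split; [split; [exact Hr | apply Rmin_l]|]. split; [nra|].
  split; [apply Rdiv_le_0_compat; lra|].
  assert (Hc : c * (r / (Rabs c + 1)) <= Rabs c * (r / (Rabs c + 1)))
    by (apply Rmult_le_compat_r; [apply Rdiv_le_0_compat; lra | apply Rle_abs]).
  replace (r / (Rabs c + 1) * r - c * (r / (Rabs c + 1)) ^ 2 / 2)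
    with (r / (Rabs c + 1) * (r - c * (r / (Rabs c + 1)) / 2)) by (field; lra).
  assert (r / (Rabs c + 1) * (Rabs c + 1) = r) by (field; lra).
  apply Rmult_lt_0_compat; [apply Rdiv_lt_0_compat; lra | nra].
Qed.

Section QuadraticGartnerEllis.

Variables (p X : R -> nat -> R) (a : R -> R) (c : R).

Hypothesis p_nonneg : ev_infty (fun t => forall k, 0 <= p t k).
Hypothesis mgf_summable : forall l,
  ev_infty (fun t => ex_series (fun k => p t k * exp (l / a t * X t k))).
Hypothesis mgf_pos : forall l, ev_infty (fun t => 0 < mgf (p t) (X t) (l / a t)).
Hypothesis log_mgf_lim : forall l,
  is_lim (fun t => a t * ln (mgf (p t) (X t) (l / a t))) p_infty (c * l ^ 2 / 2).
Hypothesis a_pos : ev_infty (fun t => 0 < a t).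
Hypothesis a_lim : is_lim a p_infty 0.

Lemma mgf_exp_bounds (l eps : R) : 0 < eps -> ev_infty (fun t =>
  exp ((c * l ^ 2 / 2 - eps) * / a t) <= mgf (p t) (X t) (l / a t)
  <= exp ((c * l ^ 2 / 2 + eps) * / a t)).
Proof.
  intros Heps.
  generalize (filter_and _ _ (mgf_pos l)
    (filter_and _ _ a_pos (is_lim_ev_close _ _ (log_mgf_lim l) eps Heps))).
  apply filter_imp. intros t (HM & Ha & Hclose). apply Rabs_def2 in Hclose.
  rewrite <- (exp_ln _ HM).
  replace (ln (mgf (p t) (X t) (l / a t)))
    with (a t * ln (mgf (p t) (X t) (l / a t)) * / a t) by (field; lra).
  assert (0 <= / a t) by (apply Rlt_le, Rinv_0_lt_compat, Ha).
  split; apply exp_monotone, Rmult_le_compat_r; lra.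
Qed.

Lemma exp_speed_large (e K : R) : 0 < e -> ev_infty (fun t => K <= exp (e * / a t)).
Proof.
  intros He. pose proof (Rabs_pos K).
  generalize (filter_and _ _ a_pos
    (is_lim_ev_close _ _ a_lim (e / (Rabs K + 1)) ltac:(apply Rdiv_lt_0_compat; lra))).
  apply filter_imp. intros t [Ha Hclose].
  rewrite Rminus_0_r, Rabs_right in Hclose by lra.
  assert (Hlarge : Rabs K + 1 <= e * / a t).
  { apply (Rmult_le_reg_r (a t)); [exact Ha|].
    replace (e * / a t * a t) with e by (field; lra).
    apply (Rmult_lt_compat_r (Rabs K + 1)) in Hclose; [|lra].
    replace (e / (Rabs K + 1) * (Rabs K + 1)) with e in Hclose by (field; lra). lra. }
  pose proof (exp_ineq1_le (e * / a t)). pose proof (Rle_abs K). lra.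
Qed.

Lemma p_summable : ev_infty (fun t => ex_series (p t)).
Proof.
  generalize (mgf_summable 0). apply filter_imp. intros t.
  apply ex_series_ext. intros k. rewrite Rdiv_0_l, Rmult_0_l, exp_0. apply Rmult_1_r.
Qed.

Lemma quadratic_upper_bound : forall C : R -> Prop, closed_set C ->
  forall y : R, (forall x, C x -> Rbar_le y (tilde_rate c x)) ->
  forall eps : R, 0 < eps ->
  ev_infty (fun t => prob (p t) (X t) C <= exp ((- y + eps) * / a t)).
Proof.
  intros C HC y Hy eps Heps.
  destruct (tilde_rate_separation c y C HC Hy) as (r & th & Hr & Hth & HCr & Hrate).
  assert (Heps2 : 0 < eps / 2) by lra.
  generalize (filter_and _ _ p_nonneg (filter_and _ _ (mgf_summable th)
    (filter_and _ _ (mgf_summable (- th)) (filter_and _ _ (mgf_exp_bounds th _ Heps2)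
    (filter_and _ _ (mgf_exp_bounds (- th) _ Heps2)
    (filter_and _ _ a_pos (exp_speed_large _ 2 Heps2))))))).
  apply filter_imp. intros t (Hp & Hplus & Hminus & (_ & Mplus) & (_ & Mminus) & Ha & Hbig).
  rewrite Rdiv_opp_l in Hminus, Mminus.
  replace (c * (- th) ^ 2 / 2) with (c * th ^ 2 / 2) in Mminus by field.
  assert (Hia : 0 < / a t) by (apply Rinv_0_lt_compat, Ha).
  eapply Rle_trans.
  { apply (prob_le_chernoff _ _ _ r (th / a t)); auto.
    apply Rmult_le_pos; lra. }
  apply Rle_trans with (exp (- (th / a t) * r) * (2 * exp ((c * th ^ 2 / 2 + eps / 2) * / a t))).
  { apply Rmult_le_compat_l; [apply Rlt_le, exp_pos | lra]. }
  apply Rle_trans with (exp ((- y + eps / 2) * / a t) * exp (eps / 2 * / a t)).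
  - rewrite Rmult_comm, Rmult_assoc, <- exp_plus, (Rmult_comm _ (exp _)).
    apply Rmult_le_compat; try lra; try apply Rlt_le, exp_pos.
    apply exp_monotone.
    replace ((c * th ^ 2 / 2 + eps / 2) * / a t + - (th / a t) * r)
      with ((- th * r + c * th ^ 2 / 2 + eps / 2) * / a t) by (unfold Rdiv; ring).
    apply Rmult_le_compat_r; lra.
  - rewrite <- exp_plus. right. f_equal. field. lra.
Qed.

(* Tilting by [th / a] centres the law at [x = c th]; the tilts [(th +- lam) / a]
   show that the tilted mass outside the [r]-ball around [x] is exponentially
   smaller than the total, so the ball, hence [O], carries most of it. *)
Lemma quadratic_lower_bound : forall O : R -> Prop, open_set O ->
  forall (x ix : R), O x -> tilde_rate c x = Finite ix ->
  forall eps : R, 0 < eps ->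
  ev_infty (fun t => exp ((- ix - eps) * / a t) <= prob (p t) (X t) O).
Proof.
  intros O HO x ix Ox Hix eps Heps.
  destruct (tilde_rate_finite _ _ _ Hix) as (th & Hx & ->).
  destruct (HO x Ox) as [r0 Hr0].
  destruct (tilt_parameters c th r0 eps (cond_pos r0) Heps)
    as (r & lam & [Hr Hrr0] & Hthr & Hlam & Hg).
  assert (Hball : forall y, Rabs (y - x) < r -> O y) by (intros y Hy; apply Hr0; unfold disc; lra).
  set (g := lam * r - c * lam ^ 2 / 2) in Hg.
  set (e1 := Rmin (g / 4) (eps / 8)).
  assert (He1 : 0 < e1) by (apply Rmin_pos; lra).
  assert (He1g : e1 <= g / 4) by apply Rmin_l.
  assert (He1eps : e1 <= eps / 8) by apply Rmin_r.
  assert (Hg2 : 0 < g / 2) by lra. assert (Heps58 : 0 < 5 * eps / 8) by lra.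
  generalize (filter_and _ _ p_nonneg (filter_and _ _ p_summable
    (filter_and _ _ (mgf_summable (th + lam)) (filter_and _ _ (mgf_summable (th - lam))
    (filter_and _ _ (mgf_exp_bounds th e1 He1) (filter_and _ _ (mgf_exp_bounds (th + lam) e1 He1)
    (filter_and _ _ (mgf_exp_bounds (th - lam) e1 He1) (filter_and _ _ a_pos
    (filter_and _ _ (exp_speed_large _ 4 Hg2) (exp_speed_large _ 2 Heps58)))))))))).
  apply filter_imp.
  intros t (Hp & Hsum & Hup & Hdown & (M0 & _) & (_ & M1) & (_ & M2) & Ha & Hgap & Hslack).
  rewrite Rdiv_plus_distr in Hup, M1. rewrite RIneq.Rdiv_minus_distr in Hdown, M2.
  assert (Hia : 0 < / a t) by (apply Rinv_0_lt_compat, Ha).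
  pose proof (mgf_le_tilt (p t) (X t) O x r (th / a t) (lam / a t) Hp
    ltac:(apply Rmult_le_pos; lra) Hball Hsum Hup Hdown) as Htilt.
  replace (th / a t * x + Rabs (th / a t) * r) with ((th * x + Rabs th * r) * / a t) in Htilt
    by (unfold Rdiv; rewrite Rabs_mult, (Rabs_right (/ a t)) by lra; ring).
  pose proof (tilted_tails_le _ _ x r th lam c e1 (a t) Ha Hx M1 M2) as HB. fold g in HB.
  assert (Hgap' : 4 <= exp ((g - 2 * e1) * / a t))
    by (eapply Rle_trans; [exact Hgap | apply exp_monotone, Rmult_le_compat_r; lra]).
  rewrite Rplus_assoc in Htilt.
  pose proof (prob_lower_from_tilt _ _ _ _ _ _ _ _ M0 Htilt HB Hgap') as Hlow.
  eapply Rle_trans; [|exact Hlow].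
  apply (Rmult_le_reg_r 2); [lra|].
  replace (exp ((c * th ^ 2 / 2 - e1 - (th * x + Rabs th * r)) * / a t) / 2 * 2)
    with (exp ((c * th ^ 2 / 2 - e1 - (th * x + Rabs th * r)) * / a t)) by field.
  eapply Rle_trans; [apply Rmult_le_compat_l; [apply Rlt_le, exp_pos | exact Hslack]|].
  rewrite <- exp_plus, <- Rmult_plus_distr_r. apply exp_monotone, Rmult_le_compat_r; [lra|].
  rewrite <- Hx. pose proof (Rabs_pos th). nra.
Qed.

Lemma quadratic_LDP : LDP p X (fun t => / a t) (tilde_rate c).
Proof.
  split; [apply tilde_rate_good|].
  split; [exact quadratic_upper_bound | exact quadratic_lower_bound].
Qed.

End QuadraticGartnerEllis.

Lemma Series_term_le (b : nat -> R) (K : nat) :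
  (forall k, 0 <= b k) -> ex_series b -> b K <= Series b.
Proof.
  intros Hb Hex. apply Series_correct, is_series_Reals in Hex.
  assert (Hsum : sum_f_R0 b K <= Series b) by (apply sum_incr; assumption).
  destruct K as [|K]; [exact Hsum|].
  pose proof (cond_pos_sum b K Hb). simpl in Hsum. lra.
Qed.

Lemma Series_perturbed_head (u b : nat -> R) (n : nat) :
  (forall k, 0 <= u k <= b k) -> (forall k, (n < k)%nat -> u k = b k) ->
  ex_series b -> 2 * sum_f_R0 b n <= Series b ->
  ex_series u /\ Series b / 2 <= Series u <= Series b.
Proof.
  intros Hub Htail Hb Hhead.
  assert (Hu : ex_series u).
  { apply (@ex_series_le R_AbsRing R_CompleteNormedModule _ b); [|exact Hb].
    intros k. change norm with Rabs. simpl. rewrite Rabs_right; apply Hub || apply Rle_ge, Hub. }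
  split; [exact Hu|]. split; [|apply Series_le; assumption].
  rewrite (Series_incr_n u (S n)), (Series_incr_n b (S n)) in * by (lia || assumption).
  simpl pred in *.
  rewrite (Series_ext (fun k => u (S n + k)%nat) (fun k => b (S n + k)%nat))
    by (intros k; apply Htail; lia).
  pose proof (cond_pos_sum u n (fun k => proj1 (Hub k))). lra.
Qed.

(* The head of a power series is dominated by its single term of index [K > n]
   once [y] is large, because [y ^ K >= y ^ n * y]. *)
Lemma power_series_head_le (dd : nat -> R) (n K : nat) (y : R) :
  (forall k, 0 <= dd k) -> ex_series (fun k => dd k * y ^ k) ->
  (n < K)%nat -> 0 < dd K -> 2 * sum_f_R0 dd n / dd K + 1 <= y ->
  2 * sum_f_R0 (fun k => dd k * y ^ k) n <= Dser dd y.
Proof.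
  intros Hdd Hex HK HddK Hy.
  set (C := sum_f_R0 dd n) in Hy.
  assert (HC : 0 <= C) by (apply cond_pos_sum, Hdd).
  assert (Hy1 : 1 <= y) by (assert (0 <= 2 * C / dd K) by (apply Rdiv_le_0_compat; lra); lra).
  assert (Hyn : 0 < y ^ n) by (apply pow_lt; lra).
  assert (Hhead : sum_f_R0 (fun k => dd k * y ^ k) n <= C * y ^ n).
  { unfold C. rewrite Rmult_comm, scal_sum. apply sum_Rle. intros k Hk.
    apply Rmult_le_compat_l; [apply Hdd | apply Rle_pow; lia || lra]. }
  assert (HyK : y ^ n * y <= y ^ K)
    by (replace (y ^ n * y) with (y ^ S n) by (simpl; ring); apply Rle_pow; lia || lra).
  assert (HCy : 2 * C <= dd K * y).
  { apply (Rmult_le_compat_l (dd K)) in Hy; [|lra].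
    replace (dd K * (2 * C / dd K + 1)) with (2 * C + dd K) in Hy by (field; lra). lra. }
  pose proof (Series_term_le (fun k => dd k * y ^ k) K
    (fun k => Rmult_le_pos _ _ (Hdd k) (pow_le y k ltac:(lra))) Hex) as Hterm.
  unfold Dser. simpl in Hterm. nra.
Qed.

Lemma exp_pow (s : R) (k : nat) : exp s ^ k = exp (s * INR k).
Proof.
  induction k as [|k IH].
  - simpl. rewrite Rmult_0_r, exp_0. reflexivity.
  - rewrite S_INR. simpl. rewrite IH, <- exp_plus. f_equal. ring.
Qed.

Lemma ln_le_one_bound (x : R) : 1 / 2 <= x <= 1 -> Rabs (ln x) <= 1.
Proof.
  intros Hx. pose proof (exp_ineq1_le 1).
  assert (Hle : ln x <= 0) by (rewrite <- ln_1; apply ln_le; lra).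
  assert (Hge : - 1 <= ln x).
  { assert (ln 2 <= 1) by (rewrite <- (ln_exp 1); apply ln_le; lra).
    assert (ln (/ 2) <= ln x) by (apply ln_le; lra).
    rewrite ln_Rinv in *; lra. }
  apply Rabs_le. lra.
Qed.

(* Only [f''(0)] is assumed to exist, so the remainder is controlled through the
   mean value theorem applied to [f'] instead of a Lagrange form. *)
Lemma taylor_peano2 (f : R -> R) :
  (forall x, ex_derive f x) -> ex_derive (Derive f) 0 ->
  forall eps, 0 < eps -> exists eta, 0 < eta /\ forall s, Rabs s < eta ->
    Rabs (f s - f 0 - Derive f 0 * s - Derive (Derive f) 0 * s ^ 2 / 2) <= eps * s ^ 2.
Proof.
  intros Hd Hd2 eps Heps.
  set (c2 := Derive (Derive f) 0). set (d0 := Derive f 0).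
  pose proof (Derive_correct _ _ Hd2) as H2. apply is_derive_Reals in H2.
  destruct (H2 eps Heps) as [eta Heta].
  exists eta. split; [apply cond_pos|]. intros s Hs.
  set (g := fun x => f x - d0 * x - c2 * x ^ 2 / 2).
  assert (Hg : forall x : R, is_derive g x (Derive f x - d0 - c2 * x)).
  { intros x. unfold g. auto_derive; [apply Hd|].
    change (Derive (fun y => f y) x) with (Derive f x). field. }
  destruct (MVT_gen g 0 s (fun x => Derive f x - d0 - c2 * x)) as (xi & Hxi & Hmvt).
  { intros x _. apply Hg. }
  { intros x _. apply continuity_pt_filterlim, (ex_derive_continuous g). eexists. apply Hg. }
  assert (Hxs : Rabs xi <= Rabs s).
  { revert Hxi. unfold Rmin, Rmax. destruct (Rle_dec 0 s); intros [H1 H3].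
    - rewrite !Rabs_right; lra.
    - rewrite !Rabs_left1; lra. }
  assert (Hdg : Rabs (Derive f xi - d0 - c2 * xi) <= eps * Rabs xi).
  { destruct (Req_dec xi 0) as [->|Hxi0].
    - unfold d0. rewrite Rmult_0_r, Rminus_0_r, Rminus_diag, Rabs_R0. lra.
    - specialize (Heta xi Hxi0 ltac:(lra)). rewrite Rplus_0_l in Heta. fold c2 in Heta.
      replace (Derive f xi - d0 - c2 * xi) with (((Derive f xi - Derive f 0) / xi - c2) * xi)
        by (unfold d0; field; auto).
      rewrite Rabs_mult. apply Rmult_le_compat_r; [apply Rabs_pos | lra]. }
  replace (f s - f 0 - d0 * s - c2 * s ^ 2 / 2) with (g s - g 0) by (unfold g; field).
  rewrite Hmvt, Rminus_0_r, Rabs_mult, <- (pow2_abs s).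
  apply Rle_trans with (eps * Rabs xi * Rabs s); [apply Rmult_le_compat_r; [apply Rabs_pos | exact Hdg]|].
  replace (eps * Rabs s ^ 2) with (eps * Rabs s * Rabs s) by ring.
  apply Rmult_le_compat_r; [apply Rabs_pos | apply Rmult_le_compat_l; lra].
Qed.

Lemma is_lim_of_ev_close (f : R -> R) (l : R) :
  (forall eps, 0 < eps -> ev_infty (fun t => Rabs (f t - l) < eps)) -> is_lim f p_infty l.
Proof. intros Hf. apply is_lim_spec. intros eps. apply Hf, cond_pos. Qed.

Lemma is_lim_mul_bounded_0 (f g : R -> R) (M : R) :
  is_lim f p_infty 0 -> ev_infty (fun t => Rabs (g t) <= M) ->
  is_lim (fun t => f t * g t) p_infty 0.
Proof.
  intros Hf Hg. apply is_lim_of_ev_close. intros eps Heps. pose proof (Rabs_pos M).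
  assert (Heps' : 0 < eps / (Rabs M + 1)) by (apply Rdiv_lt_0_compat; lra).
  generalize (filter_and _ _ Hg (is_lim_ev_close _ _ Hf _ Heps')).
  apply filter_imp. intros t [Hgt Hft]. rewrite Rminus_0_r in *. rewrite Rabs_mult.
  pose proof (Rle_abs M). pose proof (Rabs_pos (f t)).
  apply Rle_lt_trans with (Rabs (f t) * (Rabs M + 1)); [apply Rmult_le_compat_l; lra|].
  apply (Rmult_lt_compat_r (Rabs M + 1)) in Hft; [|lra].
  replace (eps / (Rabs M + 1) * (Rabs M + 1)) with eps in Hft by (field; lra). exact Hft.
Qed.

Lemma is_lim_div_sqrt_infty (h : R -> R) (l : R) :
  is_lim h p_infty p_infty -> is_lim (fun t => l / sqrt (h t)) p_infty 0.
Proof.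
  intros Hh.
  pose proof (is_lim_scal_l _ l _ _ (is_lim_inv _ _ _ (is_lim_sqrt_p _ _ Hh) ltac:(discriminate)))
    as Hlim.
  simpl in Hlim. rewrite Rmult_0_r in Hlim. exact Hlim.
Qed.

Lemma is_lim_sqrt_0 (f : R -> R) :
  is_lim f p_infty 0 -> is_lim (fun t => sqrt (f t)) p_infty 0.
Proof.
  intros Hf. pose proof (is_lim_comp_continuous _ _ _ _ Hf (continuous_sqrt 0)) as Hlim.
  rewrite sqrt_0 in Hlim. exact Hlim.
Qed.

Lemma scaled_count_tilt (w S m v a l x : R) : 0 < v -> 0 < a ->
  w / S * exp (l / a * ((x - m) / v * sqrt (v * a)))
  = exp (- (l / sqrt (v * a)) * m) / S * (w * exp (l / sqrt (v * a) * x)).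
Proof.
  intros Hv Ha.
  assert (Hva : 0 < v * a) by nra.
  pose proof (sqrt_lt_R0 _ Hva) as Hq. pose proof (sqrt_sqrt _ (Rlt_le _ _ Hva)) as Eq.
  replace (l / a * ((x - m) / v * sqrt (v * a)))
    with (- (l / sqrt (v * a)) * m + l / sqrt (v * a) * x).
  - rewrite exp_plus. unfold Rdiv. ring.
  - replace (l / a * ((x - m) / v * sqrt (v * a)))
      with (l * (x - m) * sqrt (v * a) / (v * a)) by (field; lra).
    set (q := sqrt (v * a)) in *. rewrite <- Eq. field. lra.
Qed.

(* With [s = l / sqrt (v a)], the constant [c l^2 / 2] comes from [a v s^2 = l^2],
   and the last term collects the centering errors (ii) and (iii) via
   [a v s = l sqrt (a v)]. *)
Lemma log_mgf_split (a v l m S W P L L1 c G D dl : R) :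
  0 < a -> 0 < v -> D <> 0 -> 0 < S -> 0 < W -> 0 < P ->
  a * ln (exp (- (l / sqrt (v * a)) * m) / S * W) =
  c * l ^ 2 / 2 + (a * (ln P - v * L) + a * (ln (W / P) - ln S)
    + a * v * (L - L1 * (l / sqrt (v * a)) - c * (l / sqrt (v * a)) ^ 2 / 2)
    + l * sqrt a * (sqrt v * (L1 - dl * G / (v * D)) + / sqrt v * (dl * G / D - m))).
Proof.
  intros Ha Hv HD HS HW HP.
  unfold Rdiv at 1. rewrite ln_mult, ln_mult, ln_exp, ln_Rinv, ln_div by
    (try apply Rinv_0_lt_compat; try apply Rmult_lt_0_compat; try apply exp_pos;
     try apply Rinv_0_lt_compat; assumption).
  rewrite sqrt_mult by lra.
  pose proof (sqrt_lt_R0 v Hv) as Hqv. pose proof (sqrt_lt_R0 a Ha) as Hqa.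
  pose proof (sqrt_sqrt v (Rlt_le _ _ Hv)) as Ev. pose proof (sqrt_sqrt a (Rlt_le _ _ Ha)) as Ea.
  set (qv := sqrt v) in *. set (qa := sqrt a) in *.
  rewrite <- Ev, <- Ea. field. repeat split; lra.
Qed.

Lemma Lambda_0 (Delta : R -> R) : Lambda Delta 0 = 0.
Proof. unfold Lambda. rewrite exp_0. ring. Qed.

Lemma Lambda_derivable (Delta : R -> R) :
  (forall u, 0 < u -> ex_derive Delta u) -> forall x, ex_derive (Lambda Delta) x.
Proof. intros HDelta x. unfold Lambda. auto_derive. apply HDelta, exp_pos. Qed.

Lemma Lambda_derivable2 (Delta : R -> R) :
  (forall u, 0 < u -> ex_derive Delta u) -> ex_derive (Derive Delta) 1 ->
  ex_derive (Derive (Lambda Delta)) 0.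
Proof.
  intros HDelta HDelta2.
  apply (ex_derive_ext (fun x => Derive Delta (exp x) * exp x)).
  - intros x. symmetry. apply is_derive_unique. unfold Lambda. auto_derive.
    + apply HDelta, exp_pos.
    + change (Derive (fun y => Delta y) (exp x)) with (Derive Delta (exp x)). ring.
  - auto_derive. rewrite exp_0. exact HDelta2.
Qed.

Section Model.

Variables (d : nat -> nat -> R) (deltas : nat -> R -> R) (n : nat) (dd : nat -> R)
  (del : R -> R) (v : R -> R) (Delta : R -> R) (a : R -> R).

Hypothesis Hd_nonneg : forall k j, 0 <= d k j.
Hypothesis HDj : forall j (x : R), 0 < x ->
  ex_series (fun k => d k j * x ^ k) /\ 0 < Dj d j x.
Hypothesis Hdeltas_pos : forall j t, 0 <= t -> 0 < deltas j t.
Hypothesis Hdeltas_lim : forall j, is_lim (deltas j) p_infty p_infty.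
Hypothesis HB1_d : forall j k, (n <= j)%nat -> d k j = dd k.
Hypothesis HB1_delta : forall j t, (n <= j)%nat -> 0 <= t -> deltas j t = del t.
Hypothesis HB2 : forall M : nat, exists k, (M <= k)%nat /\ 0 < d k k.
Hypothesis HB3 : forall k, (k < n)%nat ->
  (0 < dd k ->
     is_lim (fun t => weight d deltas k t / (dd k * del t ^ k / Dser dd (del t))) p_infty 0) /\
  (dd k = 0 -> d k k = 0).

Hypothesis Hv_pos : forall x, 0 < x -> 0 < v x.
Hypothesis HDelta_der : forall u, 0 < u -> ex_derive Delta u.
Hypothesis HDelta2 : ex_derive (Derive Delta) 1.
Hypothesis Hi : forall u : R -> R, is_lim u p_infty 1 ->
  exists M : R, ev_infty (fun t =>
    Rabs (ln (Dser dd (u t * del t) / Dser dd (del t))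
          - v (del t) * (Delta (u t) - Delta 1)) <= M).
Hypothesis Hii : exists M : R, ev_infty (fun t =>
  Rabs (sqrt (v (del t)) *
        (Derive (Lambda Delta) 0
         - del t * Derive (Dser dd) (del t) / (v (del t) * Dser dd (del t)))) <= M).
Hypothesis Hiii : exists M : R, ev_infty (fun t =>
  ex_series (fun k => INR k * pmf d deltas t k) /\
  Rabs (/ sqrt (v (del t)) *
        (del t * Derive (Dser dd) (del t) / Dser dd (del t)
         - mean (pmf d deltas t))) <= M).
Hypothesis Ha_pos : forall t, 0 < t -> 0 < a t.
Hypothesis Ha_lim : is_lim a p_infty 0.
Hypothesis Hva_lim : is_lim (fun t => v (del t) * a t) p_infty p_infty.

Lemma dd_nonneg (k : nat) : 0 <= dd k.
Proof. rewrite <- (HB1_d n k) by lia. apply Hd_nonneg. Qed.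

Lemma Dj_tail (j : nat) (x : R) : (n <= j)%nat -> Dj d j x = Dser dd x.
Proof. intros Hj. unfold Dj, Dser. apply Series_ext. intros k. now rewrite HB1_d. Qed.

Lemma Dser_summable_pos (x : R) : 0 < x -> ex_series (fun k => dd k * x ^ k) /\ 0 < Dser dd x.
Proof.
  intros Hx. destruct (HDj n x Hx) as [Hex Hpos]. split.
  - revert Hex. apply ex_series_ext. intros k. now rewrite HB1_d.
  - now rewrite <- (Dj_tail n x).
Qed.

Lemma del_pos (t : R) : 0 <= t -> 0 < del t.
Proof. intros Ht. rewrite <- (HB1_delta n t) by (lia || lra). apply Hdeltas_pos, Ht. Qed.

Lemma del_lim : is_lim del p_infty p_infty.
Proof.
  apply (is_lim_ext_loc (deltas n)); [|apply Hdeltas_lim].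
  exists 0. intros t Ht. apply HB1_delta; lia || lra.
Qed.

Lemma weight_tail (t : R) (k : nat) : 0 <= t -> (n <= k)%nat ->
  weight d deltas k t = dd k * del t ^ k / Dser dd (del t).
Proof. intros Ht Hk. unfold weight. now rewrite (HB1_d k k), (HB1_delta k t), Dj_tail. Qed.

Lemma weight_nonneg (t : R) (k : nat) : 0 <= t -> 0 <= weight d deltas k t.
Proof.
  intros Ht. pose proof (Hdeltas_pos k t Ht). unfold weight.
  apply Rdiv_le_0_compat; [apply Rmult_le_pos; [apply Hd_nonneg | apply pow_le; lra]|].
  apply HDj. assumption.
Qed.

Lemma weight_head_le : ev_infty (fun t => forall k, (k < n)%nat ->
  weight d deltas k t <= dd k * del t ^ k / Dser dd (del t)).
Proof.
  apply ev_infty_forall_lt. intros k Hk. destruct (HB3 k Hk) as [Hlim Hzero].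
  destruct (Rle_lt_or_eq_dec 0 (dd k) (dd_nonneg k)) as [Hpos|Hnull].
  - generalize (filter_and _ _ (is_lim_ev_close _ _ (Hlim Hpos) 1 Rlt_0_1) (ev_infty_gt 0)).
    apply filter_imp. intros t [Hratio Ht].
    assert (Hden : 0 < dd k * del t ^ k / Dser dd (del t)).
    { pose proof (del_pos t ltac:(lra)) as Hdt.
      apply Rdiv_lt_0_compat; [apply Rmult_lt_0_compat; [lra | apply pow_lt; lra]|].
      apply Dser_summable_pos, Hdt. }
    rewrite Rminus_0_r in Hratio. apply Rabs_def2 in Hratio.
    apply (Rmult_le_reg_r (/ (dd k * del t ^ k / Dser dd (del t))));
      [apply Rinv_0_lt_compat, Hden|].
    rewrite Rinv_r by lra. unfold Rdiv at 1 in Hratio. lra.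
  - exists 0. intros t _. unfold weight. rewrite (Hzero (eq_sym Hnull)), <- Hnull.
    unfold Rdiv. rewrite !Rmult_0_l. lra.
Qed.

Definition tilted_mass (t s : R) : R := Series (fun k => weight d deltas k t * exp (s * INR k)).

Definition Dser_ratio (t s : R) : R := Dser dd (exp s * del t) / Dser dd (del t).

(* The law of [N(t)], tilted by [exp (s k)], is a perturbation on [k <= n] of
   the power-series law [dd k y ^ k / Dser dd y] with [y = exp s * del t]; by
   (B2) the perturbed head is negligible once [del t] is large. *)
Lemma tilted_mass_compare (t s : R) (K : nat) :
  0 < t -> (n < K)%nat -> 0 < dd K ->
  (forall k, (k < n)%nat -> weight d deltas k t <= dd k * del t ^ k / Dser dd (del t)) ->
  2 * sum_f_R0 dd n / dd K + 1 <= exp s * del t ->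
  ex_series (fun k => weight d deltas k t * exp (s * INR k)) /\
  0 < Dser_ratio t s /\ Dser_ratio t s / 2 <= tilted_mass t s <= Dser_ratio t s.
Proof.
  intros Ht HK HddK Hhead Hy.
  pose proof (del_pos t ltac:(lra)) as Hdt.
  destruct (Dser_summable_pos (del t) Hdt) as [_ HD].
  set (y := exp s * del t) in *.
  assert (0 <= 2 * sum_f_R0 dd n / dd K)
    by (apply Rdiv_le_0_compat; [apply Rmult_le_pos, cond_pos_sum, dd_nonneg; lra | lra]).
  destruct (Dser_summable_pos y ltac:(lra)) as [Hex HDy].
  assert (Hscale : forall k, dd k * del t ^ k / Dser dd (del t) * exp (s * INR k)
                           = dd k * y ^ k * / Dser dd (del t))
    by (intros k; unfold y; rewrite Rpow_mult_distr, exp_pow; field; lra).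
  assert (HSeries : Series (fun k => dd k * y ^ k * / Dser dd (del t)) = Dser_ratio t s)
    by (rewrite Series_scal_r; reflexivity).
  assert (HDr : 0 < Dser_ratio t s) by (apply Rdiv_lt_0_compat; assumption).
  assert (HDinv : 0 < / Dser dd (del t)) by (apply Rinv_0_lt_compat, HD).
  assert (Hcmp := Series_perturbed_head (fun k => weight d deltas k t * exp (s * INR k))
    (fun k => dd k * y ^ k * / Dser dd (del t)) n).
  rewrite HSeries in Hcmp. unfold tilted_mass.
  cut (ex_series (fun k => weight d deltas k t * exp (s * INR k)) /\
    Dser_ratio t s / 2 <= Series (fun k => weight d deltas k t * exp (s * INR k))
    <= Dser_ratio t s); [tauto|].
  apply Hcmp; clear Hcmp.
  - intros k. rewrite <- Hscale.
    pose proof (exp_pos (s * INR k)). pose proof (weight_nonneg t k ltac:(lra)).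
    split; [apply Rmult_le_pos; lra|]. apply Rmult_le_compat_r; [lra|].
    destruct (Nat.lt_ge_cases k n) as [Hk|Hk].
    + apply Hhead, Hk.
    + rewrite weight_tail by (lra || lia). lra.
  - intros k Hk. rewrite <- Hscale, weight_tail by (lra || lia). reflexivity.
  - apply (ex_series_ext (fun k => / Dser dd (del t) * (dd k * y ^ k)));
      [intros k; apply Rmult_comm|].
    apply ex_series_Rscal, Hex.
  - rewrite <- HSeries, Series_scal_r, <- scal_sum.
    pose proof (power_series_head_le dd n K y dd_nonneg Hex HK HddK Hy).
    unfold Dser in *. nra.
Qed.

Lemma tilted_mass_bounds : ev_infty (fun t => 0 < t /\ forall s, Rabs s <= 1 / 2 ->
  ex_series (fun k => weight d deltas k t * exp (s * INR k)) /\
  0 < Dser_ratio t s /\ Dser_ratio t s / 2 <= tilted_mass t s <= Dser_ratio t s).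
Proof.
  destruct (HB2 (S n)) as (K & HK & HdK).
  assert (HddK : 0 < dd K) by (rewrite <- (HB1_d K K) by lia; exact HdK).
  set (Y := 2 * sum_f_R0 dd n / dd K + 1).
  assert (HY : 1 <= Y).
  { assert (0 <= 2 * sum_f_R0 dd n / dd K)
      by (apply Rdiv_le_0_compat; [apply Rmult_le_pos, cond_pos_sum, dd_nonneg; lra | lra]).
    unfold Y. lra. }
  generalize (filter_and _ _ weight_head_le
    (filter_and _ _ (is_lim_ev_gt _ del_lim (2 * Y)) (ev_infty_gt 0))).
  apply filter_imp. intros t (Hhead & Hdel & Ht). split; [exact Ht|]. intros s Hs.
  apply (tilted_mass_compare t s K Ht ltac:(lia) HddK Hhead).
  pose proof (exp_ineq1_le s). apply Rabs_le_between in Hs.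
  pose proof (del_pos t ltac:(lra)). fold Y. nra.
Qed.


Definition normalizer (t : R) : R := Series (fun j => weight d deltas j t).

Lemma normalizer_bounds : ev_infty (fun t => 1 / 2 <= normalizer t <= 1).
Proof.
  generalize tilted_mass_bounds. apply filter_imp. intros t [Ht Hbounds].
  destruct (Hbounds 0 ltac:(rewrite Rabs_R0; lra)) as (_ & HD & Hmass).
  assert (HD1 : Dser_ratio t 0 = 1).
  { unfold Dser_ratio. rewrite exp_0, Rmult_1_l. apply Rinv_r.
    apply Rgt_not_eq, Dser_summable_pos, del_pos. lra. }
  replace (normalizer t) with (tilted_mass t 0); [lra|].
  apply Series_ext. intros k. rewrite Rmult_0_l, exp_0. apply Rmult_1_r.
Qed.


Definition scaled_count (t : R) (k : nat) : R :=
  (INR k - mean (pmf d deltas t)) / v (del t) * sqrt (v (del t) * a t).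

Definition tilt (l t : R) : R := l / sqrt (v (del t) * a t).

Lemma tilt_small (l eta : R) : 0 < eta -> ev_infty (fun t => Rabs (tilt l t) < eta).
Proof.
  intros Heta. generalize (is_lim_ev_close _ _ (is_lim_div_sqrt_infty _ l Hva_lim) eta Heta).
  apply filter_imp. intros t. now rewrite Rminus_0_r.
Qed.

Lemma pmf_nonneg : ev_infty (fun t => forall k, 0 <= pmf d deltas t k).
Proof.
  generalize (filter_and _ _ normalizer_bounds (ev_infty_gt 0)).
  apply filter_imp. intros t [HS Ht] k. unfold pmf.
  apply Rdiv_le_0_compat; [apply weight_nonneg; lra | unfold normalizer in HS; lra].
Qed.

Lemma scaled_count_tilt_at (l t : R) (k : nat) : 0 < t ->
  pmf d deltas t k * exp (l / a t * scaled_count t k)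
  = exp (- tilt l t * mean (pmf d deltas t)) / normalizer t
    * (weight d deltas k t * exp (tilt l t * INR k)).
Proof.
  intros Ht. apply scaled_count_tilt; [apply Hv_pos, del_pos | apply Ha_pos]; lra.
Qed.

Lemma scaled_mgf_summable (l : R) :
  ev_infty (fun t => ex_series (fun k => pmf d deltas t k * exp (l / a t * scaled_count t k))).
Proof.
  generalize (filter_and _ _ tilted_mass_bounds (tilt_small l (1 / 2) ltac:(lra))).
  apply filter_imp. intros t [[Ht Hbounds] Hs].
  destruct (Hbounds (tilt l t) (Rlt_le _ _ Hs)) as [Hex _].
  apply (ex_series_ext (fun k => exp (- tilt l t * mean (pmf d deltas t)) / normalizer t
    * (weight d deltas k t * exp (tilt l t * INR k)))).
  - intros k. symmetry. apply scaled_count_tilt_at, Ht.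
  - apply ex_series_Rscal, Hex.
Qed.

Lemma scaled_mgf_eq (l : R) : ev_infty (fun t =>
  mgf (pmf d deltas t) (scaled_count t) (l / a t)
  = exp (- tilt l t * mean (pmf d deltas t)) / normalizer t * tilted_mass t (tilt l t)).
Proof.
  exists 0. intros t Ht. unfold mgf, tilted_mass. rewrite <- Series_scal_l.
  apply Series_ext. intros k. apply scaled_count_tilt_at, Ht.
Qed.

Lemma scaled_mgf_pos (l : R) : ev_infty (fun t => 0 < mgf (pmf d deltas t) (scaled_count t) (l / a t)).
Proof.
  generalize (filter_and _ _ (scaled_mgf_eq l) (filter_and _ _ tilted_mass_bounds
    (filter_and _ _ normalizer_bounds (tilt_small l (1 / 2) ltac:(lra))))).
  apply filter_imp. intros t (-> & [_ Hbounds] & HS & Hs).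
  destruct (Hbounds (tilt l t) (Rlt_le _ _ Hs)) as (_ & HD & Hmass).
  apply Rmult_lt_0_compat; [apply Rdiv_lt_0_compat; [apply exp_pos | lra] | lra].
Qed.

Lemma log_ratio_term_lim (l : R) : is_lim (fun t =>
  a t * (ln (Dser_ratio t (tilt l t)) - v (del t) * Lambda Delta (tilt l t))) p_infty 0.
Proof.
  assert (Hu : is_lim (fun t => exp (tilt l t)) p_infty 1).
  { rewrite <- exp_0. apply (is_lim_comp_continuous _ exp), continuous_exp.
    apply is_lim_div_sqrt_infty, Hva_lim. }
  destruct (Hi _ Hu) as [M HM].
  exact (is_lim_mul_bounded_0 _ _ M Ha_lim HM).
Qed.

Lemma log_error_term_lim (l : R) : is_lim (fun t =>
  a t * (ln (tilted_mass t (tilt l t) / Dser_ratio t (tilt l t)) - ln (normalizer t))) p_infty 0.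
Proof.
  apply (is_lim_mul_bounded_0 _ _ 2 Ha_lim).
  generalize (filter_and _ _ tilted_mass_bounds
    (filter_and _ _ normalizer_bounds (tilt_small l (1 / 2) ltac:(lra)))).
  apply filter_imp. intros t ([_ Hbounds] & HS & Hs).
  destruct (Hbounds (tilt l t) (Rlt_le _ _ Hs)) as (_ & HD & Hmass).
  assert (Hratio : 1 / 2 <= tilted_mass t (tilt l t) / Dser_ratio t (tilt l t) <= 1).
  { set (W := tilted_mass t (tilt l t)) in *. set (P := Dser_ratio t (tilt l t)) in *.
    split; apply (Rmult_le_reg_r P); try lra; replace (W / P * P) with W by (field; lra); lra. }
  pose proof (ln_le_one_bound _ Hratio). pose proof (ln_le_one_bound _ HS).
  unfold Rminus. eapply Rle_trans; [apply Rabs_triang|]. rewrite Rabs_Ropp. lra.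
Qed.

Lemma taylor_term_lim (l : R) : is_lim (fun t =>
  a t * v (del t) * (Lambda Delta (tilt l t) - Derive (Lambda Delta) 0 * tilt l t
                     - Derive (Derive (Lambda Delta)) 0 * tilt l t ^ 2 / 2)) p_infty 0.
Proof.
  apply is_lim_of_ev_close. intros eps Heps.
  assert (Heps' : 0 < eps / (l ^ 2 + 1)) by (apply Rdiv_lt_0_compat; nra).
  destruct (taylor_peano2 (Lambda Delta) (Lambda_derivable Delta HDelta_der)
    (Lambda_derivable2 Delta HDelta_der HDelta2) _ Heps') as (eta & Heta & Htaylor).
  generalize (filter_and _ _ (is_lim_ev_gt _ Hva_lim 0) (tilt_small l eta Heta)).
  apply filter_imp. intros t [Hva Hs].
  specialize (Htaylor _ Hs). rewrite Lambda_0, Rminus_0_r in Htaylor.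
  assert (Hl2 : a t * v (del t) * tilt l t ^ 2 = l ^ 2).
  { unfold tilt. pose proof (sqrt_lt_R0 _ Hva) as Hq.
    pose proof (sqrt_sqrt _ (Rlt_le _ _ Hva)) as Eq. set (q := sqrt _) in *.
    replace (a t * v (del t)) with (q * q) by (rewrite Eq; ring). field. lra. }
  rewrite Rminus_0_r, Rabs_mult, (Rabs_right (a t * v (del t))) by lra.
  apply Rle_lt_trans with (a t * v (del t) * (eps / (l ^ 2 + 1) * tilt l t ^ 2));
    [apply Rmult_le_compat_l; lra|].
  replace (a t * v (del t) * (eps / (l ^ 2 + 1) * tilt l t ^ 2))
    with (eps * (l ^ 2 / (l ^ 2 + 1))) by (rewrite <- Hl2; field; nra).
  assert (l ^ 2 / (l ^ 2 + 1) < 1)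
    by (apply (Rmult_lt_reg_r (l ^ 2 + 1)); [nra|]; unfold Rdiv; rewrite Rmult_assoc, Rinv_l; nra).
  nra.
Qed.

Lemma centering_term_lim (l : R) : is_lim (fun t => l * sqrt (a t) *
  (sqrt (v (del t)) * (Derive (Lambda Delta) 0
                        - del t * Derive (Dser dd) (del t) / (v (del t) * Dser dd (del t)))
   + / sqrt (v (del t)) * (del t * Derive (Dser dd) (del t) / Dser dd (del t)
                            - mean (pmf d deltas t)))) p_infty 0.
Proof.
  destruct Hii as [M2 HM2]. destruct Hiii as [M3 HM3].
  apply (is_lim_mul_bounded_0 _ _ (M2 + M3)).
  - pose proof (is_lim_scal_l _ l _ _ (is_lim_sqrt_0 _ Ha_lim)) as Hlim.
    simpl in Hlim. rewrite Rmult_0_r in Hlim. exact Hlim.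
  - generalize (filter_and _ _ HM2 HM3). apply filter_imp. intros t [H2 [_ H3]].
    eapply Rle_trans; [apply Rabs_triang | lra].
Qed.

Lemma log_mgf_decomposition (l : R) : ev_infty (fun t =>
  a t * ln (mgf (pmf d deltas t) (scaled_count t) (l / a t)) =
  Derive (Derive (Lambda Delta)) 0 * l ^ 2 / 2 +
  (a t * (ln (Dser_ratio t (tilt l t)) - v (del t) * Lambda Delta (tilt l t))
   + a t * (ln (tilted_mass t (tilt l t) / Dser_ratio t (tilt l t)) - ln (normalizer t))
   + a t * v (del t) * (Lambda Delta (tilt l t) - Derive (Lambda Delta) 0 * tilt l t
                        - Derive (Derive (Lambda Delta)) 0 * tilt l t ^ 2 / 2)
   + l * sqrt (a t) *
     (sqrt (v (del t)) * (Derive (Lambda Delta) 0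
                          - del t * Derive (Dser dd) (del t) / (v (del t) * Dser dd (del t)))
      + / sqrt (v (del t)) * (del t * Derive (Dser dd) (del t) / Dser dd (del t)
                              - mean (pmf d deltas t))))).
Proof.
  generalize (filter_and _ _ (scaled_mgf_eq l) (filter_and _ _ tilted_mass_bounds
    (filter_and _ _ normalizer_bounds (tilt_small l (1 / 2) ltac:(lra))))).
  apply filter_imp. intros t (-> & [Ht Hbounds] & HS & Hs).
  destruct (Hbounds (tilt l t) (Rlt_le _ _ Hs)) as (_ & HD & Hmass).
  pose proof (del_pos t ltac:(lra)) as Hdt.
  apply log_mgf_split; try lra.
  - apply Ha_pos, Ht.
  - apply Hv_pos, Hdt.
  - apply Rgt_not_eq, Dser_summable_pos, Hdt.
Qed.

Lemma scaled_log_mgf_lim (l : R) : is_lim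
  (fun t => a t * ln (mgf (pmf d deltas t) (scaled_count t) (l / a t))) p_infty
  (Derive (Derive (Lambda Delta)) 0 * l ^ 2 / 2).
Proof.
  pose proof (is_lim_plus' _ _ _ _ _ (is_lim_plus' _ _ _ _ _ (is_lim_plus' _ _ _ _ _
    (log_ratio_term_lim l) (log_error_term_lim l)) (taylor_term_lim l)) (centering_term_lim l))
    as Hterms.
  pose proof (is_lim_plus' _ _ _ _ _
    (is_lim_const (Derive (Derive (Lambda Delta)) 0 * l ^ 2 / 2) p_infty) Hterms) as Hsum.
  rewrite !Rplus_0_r in Hsum.
  eapply is_lim_ext_loc; [|exact Hsum].
  generalize (log_mgf_decomposition l). apply filter_imp. intros t Ht. symmetry. exact Ht.
Qed.

Lemma scaled_count_LDP :
  LDP (pmf d deltas) scaled_count (fun t => / a t)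
      (tilde_rate (Derive (Derive (Lambda Delta)) 0)).
Proof.
  apply quadratic_LDP.
  - exact pmf_nonneg.
  - exact scaled_mgf_summable.
  - exact scaled_mgf_pos.
  - exact scaled_log_mgf_lim.
  - exists 0. exact Ha_pos.
  - exact Ha_lim.
Qed.

End Model.
Theorem proposition3p2
  (d : nat -> nat -> R) (deltas : nat -> R -> R)
  (n : nat) (dd : nat -> R) (del : R -> R) (v : R -> R) (Delta : R -> R)
  (* standing assumptions *)
  (Hd_nonneg : forall k j, 0 <= d k j)
  (HDj : forall j (x : R), 0 < x ->
     ex_series (fun k => d k j * x ^ k) /\ 0 < Dj d j x)
  (Hdeltas_pos : forall j t, 0 <= t -> 0 < deltas j t)
  (Hdeltas_lim : forall j, is_lim (deltas j) p_infty p_infty)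
  (Hsum : forall x : R, 0 < x ->
     ex_series (fun j => d j j * x ^ j / Dj d j x) /\
     0 < Series (fun j => d j j * x ^ j / Dj d j x))
  (* (B1) *)
  (HB1_d : forall j k, (n <= j)%nat -> d k j = dd k)
  (HB1_delta : forall j t, (n <= j)%nat -> 0 <= t -> deltas j t = del t)
  (Hv_pos : forall x, 0 < x -> 0 < v x)
  (Hv_lim : is_lim v p_infty p_infty)
  (HDelta_der : forall u, 0 < u -> ex_derive Delta u)
  (HDelta_lim : forall u, 0 < u ->
     is_lim (fun t => ln (Dser dd (u * t)) / v t) p_infty (Delta u))
  (* (B2) *)
  (HB2 : forall M : nat, exists k, (M <= k)%nat /\ 0 < d k k)
  (* (B3) *)
  (HB3 : forall k, (k < n)%nat ->
     (0 < dd k ->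
        is_lim (fun t => weight d deltas k t / (dd k * del t ^ k / Dser dd (del t)))
               p_infty 0) /\
     (dd k = 0 -> d k k = 0))
  (* Delta''(1) exists *)
  (HDelta2 : ex_derive (Derive Delta) 1)
  (* (i) *)
  (Hi : forall u : R -> R, is_lim u p_infty 1 ->
     exists M : R, ev_infty (fun t =>
       Rabs (ln (Dser dd (u t * del t) / Dser dd (del t))
             - v (del t) * (Delta (u t) - Delta 1)) <= M))
  (* (ii) *)
  (Hii : exists M : R, ev_infty (fun t =>
       Rabs (sqrt (v (del t)) *
             (Derive (Lambda Delta) 0
              - del t * Derive (Dser dd) (del t) / (v (del t) * Dser dd (del t)))) <= M))
  (* (iii) *)
  (Hiii : exists M : R, ev_infty (fun t =>
       ex_series (fun k => INR k * pmf d deltas t k) /\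
       Rabs (/ sqrt (v (del t)) *
             (del t * Derive (Dser dd) (del t) / Dser dd (del t)
              - mean (pmf d deltas t))) <= M)) :
  forall a : R -> R,
    (forall t, 0 < t -> 0 < a t) ->
    is_lim a p_infty 0 ->
    is_lim (fun t => v (del t) * a t) p_infty p_infty ->
    good_rate_function (tilde_rate (Derive (Derive (Lambda Delta)) 0)) /\
    LDP (pmf d deltas)
        (fun t k => (INR k - mean (pmf d deltas t)) / v (del t) * sqrt (v (del t) * a t))
        (fun t => / a t)
        (tilde_rate (Derive (Derive (Lambda Delta)) 0)).
Proof.
  intros a Ha_pos Ha_lim Hva_lim. split.
  - apply tilde_rate_good.
  - eapply scaled_count_LDP; eassumption.
Qed.
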